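(* Let $\Phi,\Psi,S,T$ be finite sets and let $p(s,t,\varphi,\psi)$ be a state-consistent entangled joint distribution on $S\times T\times\Phi\times\Psi$, where the states $\varphi,\psi$ are independent with marginals $p(\varphi),p(\psi)$. Define $\widetilde p(s,t,\varphi,\psi)=p(s,t,\varphi)\,p(\psi)$, where $p(s,t,\varphi)=\sum_{\psi}p(s,t,\varphi,\psi)$. If $(s,t,\varphi,\psi)$ is distributed according to $\widetilde p$, then $t$ is independent of $(\varphi,\psi)$; specifically $\widetilde p(t,\varphi,\psi)=p(t)\,p(\varphi,\psi)$.
   Context: A joint distribution of $(s,t,\varphi,\psi)$ is: state-consistent if its $(\varphi,\psi)$-marginal equals $p(\varphi)p(\psi)$; disjoint if $\Pr\{\psi\mid\varphi,s\}=\Pr\{\psi\mid\varphi\}$ and $\Pr\{\varphi\mid\psi,t\}=\Pr\{\varphi\mid\psi\}$ (whenever the conditioning events have positive probability); classically generated if there exists a random variable $x$ independent of $(\varphi,\psi)$ such that $p(s,t\mid x,\varphi,\psi)=p(s\mid x,\varphi)\,p(t\mid x,\psi)$; entangled if it is disjoint and not classically generated. *)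

From mathcomp Require Import all_boot all_order all_algebra.
Set Implicit Arguments. Unset Strict Implicit. Unset Printing Implicit Defensive.
Import Order.TTheory GRing.Theory Num.Theory.
Local Open Scope ring_scope.

Section Joint.
Variables (R : realFieldType) (S T F P : finType).
(* F = Phi (states phi), P = Psi (states psi);  p s t phi psi *)
Variable p : S -> T -> F -> P -> R.

Definition is_joint_dist : Prop :=
  (forall s t f g, 0 <= p s t f g) /\
  \sum_(s : S) \sum_(t : T) \sum_(f : F) \sum_(g : P) p s t f g = 1.

Definition mPhi (f : F) : R := \sum_(s : S) \sum_(t : T) \sum_(g : P) p s t f g.
Definition mPsi (g : P) : R := \sum_(s : S) \sum_(t : T) \sum_(f : F) p s t f g.
Definition mT (t : T) : R := \sum_(s : S) \sum_(f : F) \sum_(g : P) p s t f g.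
Definition mPhiPsi (f : F) (g : P) : R := \sum_(s : S) \sum_(t : T) p s t f g.
Definition mPhiS (f : F) (s : S) : R := \sum_(t : T) \sum_(g : P) p s t f g.
Definition mPsiT (g : P) (t : T) : R := \sum_(s : S) \sum_(f : F) p s t f g.
Definition mPhiSPsi (f : F) (s : S) (g : P) : R := \sum_(t : T) p s t f g.
Definition mPsiTPhi (g : P) (t : T) (f : F) : R := \sum_(s : S) p s t f g.
Definition mSTPhi (s : S) (t : T) (f : F) : R := \sum_(g : P) p s t f g.

Definition state_consistent : Prop :=
  forall f g, mPhiPsi f g = mPhi f * mPsi g.

(* Pr{psi | phi, s} = Pr{psi | phi} and Pr{phi | psi, t} = Pr{phi | psi},
   whenever the conditioning events have positive probability *)
Definition disjoint : Prop :=
  (forall f s g, 0 < mPhiS f s ->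
     mPhiSPsi f s g / mPhiS f s = mPhiPsi f g / mPhi f) /\
  (forall g t f, 0 < mPsiT g t ->
     mPsiTPhi g t f / mPsiT g t = mPhiPsi f g / mPsi g).

(* There is a (finitely valued) random variable x, jointly distributed with
   (s,t,phi,psi) via q, such that the (s,t,phi,psi)-marginal of q is p,
   x is independent of (phi,psi), and
   p(s,t | x,phi,psi) = p(s | x,phi) p(t | x,psi)
   (whenever p(x,phi,psi) > 0). *)
Definition classically_generated : Prop :=
  exists (X : finType) (q : X -> S -> T -> F -> P -> R),
    (forall x s t f g, 0 <= q x s t f g) /\
    (forall s t f g, \sum_(x : X) q x s t f g = p s t f g) /\
    (let qX x := \sum_(s : S) \sum_(t : T) \sum_(f : F) \sum_(g : P) q x s t f g in
     let qFG f g := \sum_(x : X) \sum_(s : S) \sum_(t : T) q x s t f g in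
     let qXFG x f g := \sum_(s : S) \sum_(t : T) q x s t f g in
     let qXF x f := \sum_(s : S) \sum_(t : T) \sum_(g : P) q x s t f g in
     let qXG x g := \sum_(s : S) \sum_(t : T) \sum_(f : F) q x s t f g in
     let qXSF x s f := \sum_(t : T) \sum_(g : P) q x s t f g in
     let qXTG x t g := \sum_(s : S) \sum_(f : F) q x s t f g in
     (forall x f g, qXFG x f g = qX x * qFG f g) /\
     (forall x s t f g, 0 < qXFG x f g ->
        q x s t f g / qXFG x f g =
        (qXSF x s f / qXF x f) * (qXTG x t g / qXG x g))).

Definition entangled : Prop := disjoint /\ ~ classically_generated.

Definition ptilde (s : S) (t : T) (f : F) (g : P) : R := mSTPhi s t f * mPsi g.

End Joint.

From Pilot Require Import Defs.
From mathcomp Require Import all_boot all_order all_algebra.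
Import Order.TTheory GRing.Theory Num.Theory.
Set Implicit Arguments. Unset Strict Implicit. Unset Printing Implicit Defensive.
Local Open Scope ring_scope.

(* Disjointness for t says Pr{phi | psi, t} = Pr{phi | psi}, and state
   consistency makes Pr{phi | psi} = p(phi); hence p(t, phi, psi) =
   p(t, psi) p(phi), and summing over psi gives p(t, phi) = p(t) p(phi).
   Under ptilde the psi-coordinate is an independent copy of p(psi), so
   ptilde(t, phi, psi) = p(t) p(phi) p(psi) = p(t) p(phi, psi). *)

Lemma ler_sum_term (R : numDomainType) (I : finType) (F : I -> R) (i : I) :
  (forall j, 0 <= F j) -> F i <= \sum_j F j.
Proof. by move=> F_ge0; rewrite (bigD1 i) //= lerDl sumr_ge0. Qed.

(* The conditional a / b is only prescribed where b > 0; at b = 0 the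
   bound 0 <= a <= b forces a = 0. *)
Lemma eq_mul_of_cond (R : numFieldType) (a b c : R) :
  0 <= a <= b -> (0 < b -> a / b = c) -> a = b * c.
Proof.
case/andP=> a_ge0 le_ab cond; have [b0 | b_neq0] := eqVneq b 0.
  by rewrite b0 mul0r; apply/le_anti; rewrite a_ge0 -b0 le_ab.
have b_gt0 : 0 < b by rewrite lt_def b_neq0 (le_trans a_ge0 le_ab).
by rewrite -cond // mulrC divfK.
Qed.

Section Marginals.
Variables (R : realFieldType) (S T F P : finType) (p : S -> T -> F -> P -> R).
Hypothesis p_ge0 : forall s t f g, 0 <= p s t f g.

Lemma mPsiT_sum_mPsiTPhi g t : mPsiT p g t = \sum_f mPsiTPhi p g t f.
Proof. by rewrite /mPsiT /mPsiTPhi exchange_big. Qed.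

Lemma mPsi_sum_mPsiT g : mPsi p g = \sum_t mPsiT p g t.
Proof. by rewrite /mPsi /mPsiT exchange_big. Qed.

Lemma mT_sum_mPsiT t : mT p t = \sum_g mPsiT p g t.
Proof.
rewrite /mT /mPsiT; under eq_bigr => s _ do rewrite exchange_big.
exact: exchange_big.
Qed.

Lemma sum_mSTPhi t f : \sum_s mSTPhi p s t f = \sum_g mPsiTPhi p g t f.
Proof. by rewrite /mSTPhi /mPsiTPhi exchange_big. Qed.

Lemma mPsiTPhi_ge0 g t f : 0 <= mPsiTPhi p g t f.
Proof. by apply: sumr_ge0 => s _; apply: p_ge0. Qed.

Lemma mPsiT_ge0 g t : 0 <= mPsiT p g t.
Proof. by rewrite mPsiT_sum_mPsiTPhi sumr_ge0 // => f _; apply: mPsiTPhi_ge0. Qed.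

Lemma mPsiTPhi_le_mPsiT g t f : mPsiTPhi p g t f <= mPsiT p g t.
Proof. by rewrite mPsiT_sum_mPsiTPhi ler_sum_term // => f'; apply: mPsiTPhi_ge0. Qed.

Lemma mPsiT_le_mPsi g t : mPsiT p g t <= mPsi p g.
Proof. by rewrite mPsi_sum_mPsiT ler_sum_term // => t'; apply: mPsiT_ge0. Qed.

Hypotheses (p_sc : state_consistent p) (p_disj : Defs.disjoint p).

Lemma mPsiTPhi_indep g t f : mPsiTPhi p g t f = mPsiT p g t * mPhi p f.
Proof.
apply: eq_mul_of_cond; first by rewrite mPsiTPhi_ge0 mPsiTPhi_le_mPsiT.
move=> mPsiT_gt0; have mPsi_gt0 := lt_le_trans mPsiT_gt0 (mPsiT_le_mPsi g t).
by rewrite p_disj.2 // p_sc mulfK ?gt_eqF.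
Qed.

Lemma mTPhi_indep t f : \sum_s mSTPhi p s t f = mT p t * mPhi p f.
Proof.
rewrite sum_mSTPhi mT_sum_mPsiT mulr_suml.
by apply: eq_bigr => g _; apply: mPsiTPhi_indep.
Qed.

End Marginals.

Theorem corollary4 (R : realFieldType) (S T F P : finType)
    (p : S -> T -> F -> P -> R) :
  is_joint_dist p -> state_consistent p -> entangled p ->
  forall (t : T) (f : F) (g : P),
    \sum_(s : S) ptilde p s t f g = mT p t * mPhiPsi p f g.
Proof.
move=> [p_ge0 _] p_sc [p_disj _] t f g.
by rewrite /ptilde -mulr_suml (mTPhi_indep p_ge0 p_sc p_disj) p_sc mulrA.
Qed.
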